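(* For every BAO-complex spi-rule logic $rL$, the following are equivalent: (i) $rL$ is complex; (ii) $rL$ is globally complete; (iii) $rL$ is BAO-rule-conservative; (iv) $rL$ is BAO-embeddable.
   Context: Fix a signature $\mathcal R$ with diamonds $\Diamond_R$. Sp-formulas: built from propositional variables and $\top$ by $\wedge$ and the $\Diamond_R$; sp-implications $\sigma\to\tau$. A SLO is an algebra $(A,\wedge,\top,\Diamond_R)_R$ with $(A,\wedge,\top)$ a meet-semilattice with top and each $\Diamond_R$ monotone. A BAO is an algebra $(A,\wedge,\vee,-,\bot,\top,\Diamond_R)_R$ that is a Boolean algebra with operators satisfying $\Diamond_R\bot=\bot$ and $\Diamond_R(a\vee b)=\Diamond_Ra\vee\Diamond_Rb$; its sp-type reduct is $(A,\wedge,\top,\Diamond_R)_R$. For a frame $\mathfrak F=(W,R^{\mathfrak F})_R$, $\mathfrak F^\star=(2^W,\cap,W,\Diamond_R^+)_R$ with $\Diamond_R^+X=\{w\mid\exists v\in X,(w,v)\in R^{\mathfrak F}\}$ (the sp-type reduct of the full complex algebra of $\mathfrak F$); $\mathsf{CA}=\{\mathfrak F^\star\mid\mathfrak F\text{ a frame}\}$. An embedding is an injective map preserving $\wedge,\top$ and all $\Diamond_R$. An spi-rule is $\rho=\frac{\iota_1,\dots,\iota_n}{\iota}$ with sp-implications $\iota_1,\dots,\iota_n,\iota$ ($n\ge0$). An algebra $\mathfrak A$ with an sp-type reduct validates $\rho$ if for every valuation $\mathfrak a$ in $\mathfrak A$: whenever $\sigma_i[\mathfrak a]\le\tau_i[\mathfrak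 a]$ for all $\iota_i=(\sigma_i\to\tau_i)$, also $\sigma[\mathfrak a]\le\tau[\mathfrak a]$ for $\iota=(\sigma\to\tau)$. A rule holds in a Kripke model if $\iota$ is true at all points whenever each $\iota_i$ is true at all points; a frame validates $\rho$ if $\rho$ holds in every model over it. An spi-rule logic is a set $rL=\{\rho\mid\mathfrak A\models\rho\text{ for all }\mathfrak A\in\mathcal K\}$ for some class $\mathcal K$ of SLOs. $\mathsf{Kr}_{rL}$ is the class of frames validating all rules in $rL$. For a class $\mathcal C$ of algebras with sp-type reducts, $\mathcal C_{rL}=\{\mathfrak A\in\mathcal C\mid\mathfrak A\models\rho\ \forall\rho\in rL\}$ and $rL\models_{\mathcal C}\rho$ iff every $\mathfrak A\in\mathcal C_{rL}$ validates $\rho$; $\mathsf{SLO}$ and $\mathsf{BAO}$ denote the classes of all SLOs and all BAOs. $rL$ is $\mathcal C$-embeddable if every SLO in $\mathsf{SLO}_{rL}$ embeds into the sp-type reduct of some $\mathfrak B\in\mathcal C_{rL}$; $\mathcal C$-rule-conservative if $rL\models_{\mathcal C}\rho$ implies $rL\models_{\mathsf{SLO}}\rho$ for every spi-rule $\rho$. $rL$ is complex if it is $\mathsf{CA}$-embeddable, globally complete if it is $\mathsf{CA}$-rule-conservative, and BAO-complex if the sp-type reduct of every $\mathfrak A\in\mathsf{BAO}_{rL}$ embeds into some $\mathfrak F^\star$ with $\mathfrak F\in\mathsf{Kr}_{rL}$. *)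

From Stdlib Require Import List.
Import ListNotations.

Section SpiLogic.
Variable Sig : Type.

Inductive spf : Type :=
| Var : nat -> spf
| Top : spf
| And : spf -> spf -> spf
| Dia : Sig -> spf -> spf.

Definition spimp : Type := (spf * spf)%type.

Record spirule : Type := mkRule { premises : list spimp; conclusion : spimp }.

Record spAlg : Type := mkSpAlg {
  car : Type;
  meet : car -> car -> car;
  top : car;
  dia : Sig -> car -> car }.

Definition le (A : spAlg) (a b : car A) : Prop := meet A a b = a.

Definition isSLO (A : spAlg) : Prop :=
  (forall a, meet A a a = a) /\
  (forall a b, meet A a b = meet A b a) /\
  (forall a b c, meet A a (meet A b c) = meet A (meet A a b) c) /\
  (forall a, meet A a (top A) = a) /\
  (forall R a b, le A a b -> le A (dia A R a) (dia A R b)).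

(** the sp-algebra A is the sp-type reduct of a BAO with join j, complement c
    and bottom z *)
Definition isBAO (A : spAlg) (j : car A -> car A -> car A) (c : car A -> car A)
    (z : car A) : Prop :=
  (forall a b, meet A a b = meet A b a) /\
  (forall a b, j a b = j b a) /\
  (forall a b x, meet A a (meet A b x) = meet A (meet A a b) x) /\
  (forall a b x, j a (j b x) = j (j a b) x) /\
  (forall a b, meet A a (j a b) = a) /\
  (forall a b, j a (meet A a b) = a) /\
  (forall a b x, meet A a (j b x) = j (meet A a b) (meet A a x)) /\
  (forall a, meet A a (top A) = a) /\
  (forall a, j a z = a) /\
  (forall a, meet A a (c a) = z) /\
  (forall a, j a (c a) = top A) /\
  (forall R, dia A R z = z) /\
  (forall R a b, dia A R (j a b) = j (dia A R a) (dia A R b)).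

Fixpoint eval (A : spAlg) (v : nat -> car A) (s : spf) : car A :=
  match s with
  | Var n => v n
  | Top => top A
  | And s t => meet A (eval A v s) (eval A v t)
  | Dia R s => dia A R (eval A v s)
  end.

Definition holds_imp (A : spAlg) (v : nat -> car A) (i : spimp) : Prop :=
  le A (eval A v (fst i)) (eval A v (snd i)).

Definition validates (A : spAlg) (r : spirule) : Prop :=
  forall v : nat -> car A,
    (forall i, In i (premises r) -> holds_imp A v i) -> holds_imp A v (conclusion r).

Definition validates_all (A : spAlg) (rL : spirule -> Prop) : Prop :=
  forall r, rL r -> validates A r.

Definition is_spi_logic (rL : spirule -> Prop) : Prop :=
  exists K : spAlg -> Prop,
    (forall A, K A -> isSLO A) /\
    (forall r, rL r <-> (forall A, K A -> validates A r)).

Record frame : Type := mkFrame { W : Type; rel : Sig -> W -> W -> Prop }.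

Fixpoint ktrue (F : frame) (V : nat -> W F -> Prop) (w : W F) (s : spf) : Prop :=
  match s with
  | Var n => V n w
  | Top => True
  | And s t => ktrue F V w s /\ ktrue F V w t
  | Dia R s => exists u, rel F R w u /\ ktrue F V u s
  end.

Definition ktrue_imp (F : frame) (V : nat -> W F -> Prop) (w : W F) (i : spimp) : Prop :=
  ktrue F V w (fst i) -> ktrue F V w (snd i).

Definition rule_holds_model (F : frame) (V : nat -> W F -> Prop) (r : spirule) : Prop :=
  (forall i, In i (premises r) -> forall w, ktrue_imp F V w i) ->
  forall w, ktrue_imp F V w (conclusion r).

Definition frame_validates (F : frame) (r : spirule) : Prop :=
  forall V, rule_holds_model F V r.

Definition Kr (rL : spirule -> Prop) (F : frame) : Prop :=
  forall r, rL r -> frame_validates F r.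

(** F^star : the sp-type reduct of the full complex algebra of F *)
Definition Fstar (F : frame) : spAlg :=
  {| car := W F -> Prop;
     meet := fun X Y w => X w /\ Y w;
     top := fun _ => True;
     dia := fun R X w => exists u, X u /\ rel F R w u |}.

(** classes of algebras with sp-type reducts (given by their reducts) *)
Definition SLOc : spAlg -> Prop := isSLO.
Definition BAOc (A : spAlg) : Prop := exists j c z, isBAO A j c z.
Definition CA (A : spAlg) : Prop := exists F : frame, A = Fstar F.

Definition embedding (A B : spAlg) (f : car A -> car B) : Prop :=
  (forall a b, f a = f b -> a = b) /\
  (forall a b, f (meet A a b) = meet B (f a) (f b)) /\
  f (top A) = top B /\
  (forall R a, f (dia A R a) = dia B R (f a)).

Definition embeds (A B : spAlg) : Prop := exists f, embedding A B f.

Definition consequence (C : spAlg -> Prop) (rL : spirule -> Prop) (r : spirule) : Prop :=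
  forall A, C A -> validates_all A rL -> validates A r.

Definition C_embeddable (C : spAlg -> Prop) (rL : spirule -> Prop) : Prop :=
  forall A, SLOc A -> validates_all A rL ->
    exists B, C B /\ validates_all B rL /\ embeds A B.

Definition C_rule_conservative (C : spAlg -> Prop) (rL : spirule -> Prop) : Prop :=
  forall r, consequence C rL r -> consequence SLOc rL r.

Definition complex (rL : spirule -> Prop) : Prop := C_embeddable CA rL.
Definition globally_complete (rL : spirule -> Prop) : Prop := C_rule_conservative CA rL.

Definition BAO_complex (rL : spirule -> Prop) : Prop :=
  forall A, BAOc A -> validates_all A rL ->
    exists F : frame, Kr rL F /\ embeds A (Fstar F).

End SpiLogic.

(** The equivalences follow from the cycle (i) => (ii) => (iii) => (iv) => (i).
    Embeddings reflect the validity of spi-rules, which gives (i) => (ii) and,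
    composed with the embeddings provided by BAO-complexity, (iv) => (i);
    (ii) => (iii) holds because complex algebras are BAOs.  For (iii) => (iv),
    an SLO [A] validating [rL] is mapped into the BAO presented by the
    generators [car A], the operation table of [A] and the rules of [rL], two
    terms being identified when finitely many entries of the table force them
    to be equal in every BAO validating [rL].  An identification [a = b] of
    generators thus yields an spi-rule, with those entries as premises and
    [a <= b] as conclusion, that holds in every BAO validating [rL]; by
    BAO-rule-conservativity it holds in [A], where its premises are true. *)

From Stdlib Require Import List RelationClasses FunctionalExtensionality
  PropExtensionality ProofIrrelevance Classical ClassicalEpsilon.
Import ListNotations.

Local Arguments car {Sig}. Local Arguments meet {Sig}. Local Arguments top {Sig}.
Local Arguments dia {Sig}. Local Arguments le {Sig}. Local Arguments eval {Sig}.
Local Arguments holds_imp {Sig}. Local Arguments validates {Sig}.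
Local Arguments validates_all {Sig}. Local Arguments isSLO {Sig}.
Local Arguments isBAO {Sig}. Local Arguments Var {Sig}. Local Arguments Top {Sig}.
Local Arguments And {Sig}. Local Arguments Dia {Sig}. Local Arguments mkRule {Sig}.
Local Arguments premises {Sig}. Local Arguments conclusion {Sig}.
Local Arguments ktrue {Sig}. Local Arguments ktrue_imp {Sig}.
Local Arguments Kr {Sig}. Local Arguments Fstar {Sig}. Local Arguments embedding {Sig}.
Local Arguments embeds {Sig}. Local Arguments consequence {Sig}.
Local Arguments mkSpAlg {Sig}.

Section Order.
Variable Sig : Type.
Implicit Types (A : spAlg Sig).

Lemma SLO_le_refl A a : isSLO A -> le A a a.
Proof. intros [Hidem _]; apply Hidem. Qed.

Lemma SLO_le_antisym A a b : isSLO A -> le A a b -> le A b a -> a = b.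
Proof.
  intros (_ & Hcomm & _) Hab Hba; unfold le in *.
  rewrite <- Hab, Hcomm; exact Hba.
Qed.

Lemma BAO_le_refl A j c z a : isBAO A j c z -> le A a a.
Proof.
  intros (_ & _ & _ & _ & Habs & Habs' & _); unfold le.
  rewrite <- (Habs' a a) at 2; apply Habs.
Qed.

Lemma BAO_le_antisym A j c z a b : isBAO A j c z -> le A a b -> le A b a -> a = b.
Proof. intros [Hcomm _] Hab Hba; unfold le in *; rewrite <- Hab, Hcomm; exact Hba. Qed.

End Order.

Section Embeddings.
Variable Sig : Type.
Implicit Types (A B C : spAlg Sig) (K D : spAlg Sig -> Prop) (rL : spirule Sig -> Prop).

Lemma eval_embedding A B f v s :
  embedding A B f -> f (eval A v s) = eval B (fun n => f (v n)) s.
Proof.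
  intros (_ & Hmeet & Htop & Hdia).
  induction s; simpl; congruence.
Qed.

Lemma le_embedding A B f a b :
  embedding A B f -> le A a b <-> le B (f a) (f b).
Proof.
  intros (Hinj & Hmeet & _); unfold le; split; intros H.
  - rewrite <- Hmeet; congruence.
  - apply Hinj; rewrite Hmeet; exact H.
Qed.

Lemma validates_embeds A B r : embeds A B -> validates B r -> validates A r.
Proof.
  intros [f Hf] HB v Hprem; unfold holds_imp.
  rewrite (le_embedding _ _ _ _ _ Hf), !(eval_embedding _ _ _ _ _ Hf).
  apply HB; intros i Hi.
  specialize (Hprem i Hi); unfold holds_imp in Hprem.
  rewrite (le_embedding _ _ _ _ _ Hf), !(eval_embedding _ _ _ _ _ Hf) in Hprem.
  exact Hprem.
Qed.

Lemma embeds_trans A B C : embeds A B -> embeds B C -> embeds A C.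
Proof.
  intros [f (Hinj & Hmeet & Htop & Hdia)] [g (Hinj' & Hmeet' & Htop' & Hdia')].
  exists (fun a => g (f a)); repeat split.
  - intros a b E; apply Hinj, Hinj', E.
  - intros a b; rewrite Hmeet, Hmeet'; reflexivity.
  - rewrite Htop, Htop'; reflexivity.
  - intros R a; rewrite Hdia, Hdia'; reflexivity.
Qed.

(** [C_embeddable K rL] is [embeddable_into (SLOc Sig) K rL] by conversion. *)
Definition embeddable_into D K rL : Prop :=
  forall A, D A -> validates_all A rL ->
    exists B, K B /\ validates_all B rL /\ embeds A B.

Lemma embeddable_into_trans D D' K rL :
  embeddable_into D D' rL -> embeddable_into D' K rL -> embeddable_into D K rL.
Proof.
  intros HDD' HD'K A HA HAv.
  destruct (HDD' A HA HAv) as (B & HB & HBv & HAB).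
  destruct (HD'K B HB HBv) as (C & HC & HCv & HBC).
  exists C; split; [exact HC | split; [exact HCv | exact (embeds_trans _ _ _ HAB HBC)]].
Qed.

Lemma C_embeddable_rule_conservative K rL :
  C_embeddable Sig K rL -> C_rule_conservative Sig K rL.
Proof.
  intros Hemb r Hr A HA HAv.
  destruct (Hemb A HA HAv) as (B & HB & HBv & HAB).
  exact (validates_embeds _ _ _ HAB (Hr B HB HBv)).
Qed.

Lemma C_rule_conservative_sub K D rL :
  (forall A, K A -> D A) -> C_rule_conservative Sig K rL -> C_rule_conservative Sig D rL.
Proof.
  intros HKD Hcons r Hr; apply Hcons.
  intros A HA; exact (Hr A (HKD A HA)).
Qed.

End Embeddings.

Section ComplexAlgebras.
Variable Sig : Type.
Implicit Types (F : frame Sig) (rL : spirule Sig -> Prop).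

Lemma Fstar_BAO F : BAOc Sig (Fstar F).
Proof.
  exists (fun X Y w => X w \/ Y w), (fun X w => ~ X w), (fun _ => False).
  unfold isBAO; simpl.
  repeat split; intros;
    apply functional_extensionality; intros w;
    apply propositional_extensionality; firstorder; apply classic.
Qed.

Lemma CA_BAO A : CA Sig A -> BAOc Sig A.
Proof. intros [F ->]; apply Fstar_BAO. Qed.

Lemma eval_Fstar F V s w : eval (Fstar F) V s w <-> ktrue F V w s.
Proof.
  revert w; induction s as [n | | s IHs t IHt | R s IHs]; intros w; simpl.
  - tauto.
  - tauto.
  - rewrite IHs, IHt; tauto.
  - split; intros [u Hu]; exists u; rewrite IHs in *; tauto.
Qed.

Lemma holds_imp_Fstar F V i :
  holds_imp (Fstar F) V i <-> forall w, ktrue_imp F V w i.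
Proof.
  unfold holds_imp, le, ktrue_imp; split.
  - intros H w; rewrite <- !eval_Fstar; intros Hw.
    rewrite <- (equal_f H w) in Hw; apply Hw.
  - intros H; apply functional_extensionality; intros w.
    apply propositional_extensionality; specialize (H w).
    rewrite <- !eval_Fstar in H; simpl; tauto.
Qed.

Lemma Kr_validates_all rL F : Kr rL F -> validates_all (Fstar F) rL.
Proof.
  intros HK r Hr V Hprem; apply holds_imp_Fstar.
  apply (HK r Hr V); intros i Hi; apply holds_imp_Fstar, Hprem, Hi.
Qed.

Lemma BAO_complex_embeddable rL :
  BAO_complex Sig rL -> embeddable_into Sig (BAOc Sig) (CA Sig) rL.
Proof.
  intros Hbc A HA HAv.
  destruct (Hbc A HA HAv) as (F & HF & HAF).
  exists (Fstar F); split; [exists F; reflexivity|].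
  split; [apply Kr_validates_all, HF | exact HAF].
Qed.

End ComplexAlgebras.

Section Quotient.
Variables (T : Type) (E : T -> T -> Prop).

Definition quot : Type := {P : T -> Prop | exists t, P = E t}.

Definition cls (t : T) : quot := exist _ (E t) (ex_intro _ t eq_refl).

Definition repr (X : quot) : T :=
  proj1_sig (constructive_indefinite_description _ (proj2_sig X)).

Lemma cls_repr X : cls (repr X) = X.
Proof.
  destruct X as [P HP]; unfold repr, cls; simpl.
  destruct (constructive_indefinite_description _ HP) as [t ->]; simpl.
  apply subset_eq_compat; reflexivity.
Qed.

Hypothesis E_equiv : Equivalence E.

Lemma cls_eq t s : cls t = cls s <-> E t s.
Proof.
  split; intros H.
  - apply (f_equal (@proj1_sig _ _)) in H; simpl in H.
    rewrite H; reflexivity.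
  - apply subset_eq_compat, functional_extensionality; intros x.
    apply propositional_extensionality; split; intros Hx.
    + transitivity t; [symmetry; exact H | exact Hx].
    + transitivity s; [exact H | exact Hx].
Qed.

Lemma repr_cls t : E (repr (cls t)) t.
Proof. apply cls_eq, cls_repr. Qed.

End Quotient.

Arguments cls {T} E t. Arguments repr {T E} X.

Definition index_of {X : Type} (L : list X) (d x : X) : nat :=
  epsilon (inhabits 0) (fun n => nth n L d = x).

Lemma nth_index_of {X : Type} (L : list X) (d x : X) :
  In x L -> nth (index_of L d x) L d = x.
Proof.
  intros Hx; unfold index_of; apply epsilon_spec.
  destruct (In_nth L x d Hx) as (n & _ & Hn); exists n; exact Hn.
Qed.

Section PresentedBAO.
Variables (Sig : Type) (A : spAlg Sig) (rL : spirule Sig -> Prop).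

Inductive term : Type :=
| gen : car A -> term
| tmeet : term -> term -> term
| tjoin : term -> term -> term
| tcompl : term -> term
| tbot : term
| ttop : term
| tdia : Sig -> term -> term.

Record model : Type := Model {
  malg : spAlg Sig;
  mjoin : car malg -> car malg -> car malg;
  mcompl : car malg -> car malg;
  mbot : car malg;
  malg_BAO : isBAO malg mjoin mcompl mbot;
  malg_rL : validates_all malg rL;
  mgen : car A -> car malg }.

Fixpoint tev (m : model) (t : term) : car (malg m) :=
  match t with
  | gen a => mgen m a
  | tmeet t s => meet (malg m) (tev m t) (tev m s)
  | tjoin t s => mjoin m (tev m t) (tev m s)
  | tcompl t => mcompl m (tev m t)
  | tbot => mbot m
  | ttop => top (malg m)
  | tdia R t => dia (malg m) R (tev m t)
  end.

Fixpoint teval (u : nat -> term) (s : spf Sig) : term :=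
  match s with
  | Var n => u n
  | Top => ttop
  | And s t => tmeet (teval u s) (teval u t)
  | Dia R s => tdia R (teval u s)
  end.

Lemma tev_teval m u s : tev m (teval u s) = eval (malg m) (fun n => tev m (u n)) s.
Proof. induction s; simpl; congruence. Qed.

(** The entries of the operation table of [A]. *)
Inductive fact : Type :=
| FMeet : car A -> car A -> fact
| FTop : fact
| FDia : Sig -> car A -> fact.

Definition fact_holds (m : model) (f : fact) : Prop :=
  match f with
  | FMeet a b => mgen m (meet A a b) = meet (malg m) (mgen m a) (mgen m b)
  | FTop => mgen m (top A) = top (malg m)
  | FDia R a => mgen m (dia A R a) = dia (malg m) R (mgen m a)
  end.

Definition entails (l : list fact) (t s : term) : Prop :=
  forall m, (forall f, In f l -> fact_holds m f) -> tev m t = tev m s.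

Definition entailed (t s : term) : Prop := exists l, entails l t s.

Lemma entails_incl l l' t s : incl l l' -> entails l t s -> entails l' t s.
Proof. intros Hll' H m Hm; apply H; intros f Hf; apply Hm, Hll', Hf. Qed.

Lemma entailed_identity t s : (forall m, tev m t = tev m s) -> entailed t s.
Proof. intros H; exists []; intros m _; apply H. Qed.

Lemma entailed_fact f t s :
  (forall m, fact_holds m f -> tev m t = tev m s) -> entailed t s.
Proof. intros H; exists [f]; intros m Hm; apply H, Hm; left; reflexivity. Qed.

Lemma entails_common {X : Type} (ps : list X) (lhs rhs : X -> term) :
  (forall p, In p ps -> entailed (lhs p) (rhs p)) ->
  exists l, forall p, In p ps -> entails l (lhs p) (rhs p).
Proof.
  induction ps as [|p ps IH]; intros H.
  - exists []; intros p [].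
  - destruct (H p (or_introl eq_refl)) as [l0 H0].
    destruct IH as [l Hl]; [intros q Hq; apply H; right; exact Hq|].
    exists (l0 ++ l); intros q [<- | Hq].
    + exact (entails_incl _ _ _ _ (incl_appl _ (incl_refl _)) H0).
    + exact (entails_incl _ _ _ _ (incl_appr _ (incl_refl _)) (Hl q Hq)).
Qed.

Lemma entailed_both t t' s s' :
  entailed t t' -> entailed s s' -> exists l, entails l t t' /\ entails l s s'.
Proof.
  intros Ht Hs.
  destruct (entails_common [(t, t'); (s, s')] fst snd) as [l Hl].
  - intros p [<- | [<- | []]]; assumption.
  - exists l; split; [apply (Hl (t, t')) | apply (Hl (s, s'))]; simpl; auto.
Qed.

Lemma entailed_equiv : Equivalence entailed.
Proof.
  split.
  - intros t; apply entailed_identity; reflexivity.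
  - intros t s [l H]; exists l; intros m Hm; symmetry; apply H, Hm.
  - intros t s u Hts Hsu; destruct (entailed_both _ _ _ _ Hts Hsu) as (l & H1 & H2).
    exists l; intros m Hm; rewrite (H1 m Hm); apply H2, Hm.
Qed.

Local Notation cl := (cls entailed).

Definition presented : spAlg Sig :=
  mkSpAlg (quot term entailed) (fun X Y => cl (tmeet (repr X) (repr Y)))
    (cl ttop) (fun R X => cl (tdia R (repr X))).

Definition pjoin (X Y : car presented) : car presented := cl (tjoin (repr X) (repr Y)).
Definition pcompl (X : car presented) : car presented := cl (tcompl (repr X)).

Lemma meet_cl t s : meet presented (cl t) (cl s) = cl (tmeet t s).
Proof.
  apply cls_eq; [exact entailed_equiv|].
  destruct (entailed_both _ _ _ _ (repr_cls _ _ entailed_equiv t)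
                                  (repr_cls _ _ entailed_equiv s)) as (l & Ht & Hs).
  exists l; intros m Hm; simpl; rewrite (Ht m Hm), (Hs m Hm); reflexivity.
Qed.

Lemma top_cl : top presented = cl ttop.
Proof. reflexivity. Qed.

Lemma pjoin_cl t s : pjoin (cl t) (cl s) = cl (tjoin t s).
Proof.
  apply cls_eq; [exact entailed_equiv|].
  destruct (entailed_both _ _ _ _ (repr_cls _ _ entailed_equiv t)
                                  (repr_cls _ _ entailed_equiv s)) as (l & Ht & Hs).
  exists l; intros m Hm; simpl; rewrite (Ht m Hm), (Hs m Hm); reflexivity.
Qed.

Lemma pcompl_cl t : pcompl (cl t) = cl (tcompl t).
Proof.
  apply cls_eq; [exact entailed_equiv|].
  destruct (repr_cls _ _ entailed_equiv t) as [l H].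
  exists l; intros m Hm; simpl; rewrite (H m Hm); reflexivity.
Qed.

Lemma dia_cl R t : dia presented R (cl t) = cl (tdia R t).
Proof.
  apply cls_eq; [exact entailed_equiv|].
  destruct (repr_cls _ _ entailed_equiv t) as [l H].
  exists l; intros m Hm; simpl; rewrite (H m Hm); reflexivity.
Qed.

Lemma presented_BAO : isBAO presented pjoin pcompl (cl tbot).
Proof.
  unfold isBAO; repeat split; intros;
    repeat match goal with
      | X : car presented |- _ =>
          rewrite <- (cls_repr _ _ X); generalize (repr X); clear X; intros
      end;
    repeat rewrite ?top_cl, ?meet_cl, ?pjoin_cl, ?pcompl_cl, ?dia_cl;
    apply (cls_eq _ _ entailed_equiv), entailed_identity; intros m;
    destruct (malg_BAO m) as (? & ? & ? & ? & ? & ? & ? & ? & ? & ? & ? & ? & ?);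
    simpl; auto.
Qed.

Lemma eval_presented v s : eval presented v s = cl (teval (fun n => repr (v n)) s).
Proof.
  induction s as [n | | s IHs t IHt | R s IHs]; simpl.
  - symmetry; apply cls_repr.
  - reflexivity.
  - rewrite IHs, IHt; apply meet_cl.
  - rewrite IHs; apply dia_cl.
Qed.

Lemma holds_imp_presented v i :
  holds_imp presented v i <->
  entailed (tmeet (teval (fun n => repr (v n)) (fst i)) (teval (fun n => repr (v n)) (snd i)))
           (teval (fun n => repr (v n)) (fst i)).
Proof.
  unfold holds_imp, le; rewrite !eval_presented, meet_cl.
  apply cls_eq, entailed_equiv.
Qed.

Lemma presented_validates : validates_all presented rL.
Proof.
  intros r Hr v Hprem; apply holds_imp_presented.
  set (u := fun n => repr (v n)).
  destruct (entails_common (premises r)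
              (fun i => tmeet (teval u (fst i)) (teval u (snd i))) (fun i => teval u (fst i)))
    as [l Hl].
  { intros i Hi; apply holds_imp_presented, Hprem, Hi. }
  exists l; intros m Hm; simpl; rewrite !tev_teval.
  apply (malg_rL m r Hr); intros i Hi.
  unfold holds_imp, le; rewrite <- !tev_teval; apply (Hl i Hi m Hm).
Qed.

Definition fact_elems (f : fact) : list (car A) :=
  match f with
  | FMeet a b => [a; b; meet A a b]
  | FTop => [top A]
  | FDia R a => [a; dia A R a]
  end.

Definition fact_identity (ix : car A -> nat) (f : fact) : spimp Sig :=
  match f with
  | FMeet a b => (Var (ix (meet A a b)), And (Var (ix a)) (Var (ix b)))
  | FTop => (Var (ix (top A)), Top)
  | FDia R a => (Var (ix (dia A R a)), Dia R (Var (ix a)))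
  end.

Definition identity_imps (e : spimp Sig) : list (spimp Sig) := [e; (snd e, fst e)].

Lemma fact_holds_identity C j c z (HB : isBAO C j c z) (HC : validates_all C rL) ix v f :
  fact_holds (Model C j c z HB HC (fun x => v (ix x))) f
  = (eval C v (fst (fact_identity ix f)) = eval C v (snd (fact_identity ix f))).
Proof. destruct f; reflexivity. Qed.

Lemma fact_identity_in_A ix w f :
  (forall x, In x (fact_elems f) -> w (ix x) = x) ->
  eval A w (fst (fact_identity ix f)) = eval A w (snd (fact_identity ix f)).
Proof. intros Hw; destruct f; simpl; rewrite !Hw; simpl; auto. Qed.

Section Conservativity.
Hypothesis rL_conservative : C_rule_conservative Sig (BAOc Sig) rL.
Hypothesis A_SLO : isSLO A.
Hypothesis A_rL : validates_all A rL.

Lemma entails_gen_le l a b : entails l (gen a) (gen b) -> le A a b.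
Proof.
  intros Hab.
  set (L := a :: b :: flat_map fact_elems l).
  set (ix := index_of L (top A)).
  set (rho := mkRule (flat_map (fun f => identity_imps (fact_identity ix f)) l)
                     (Var (ix a), Var (ix b))).
  assert (Hrho : consequence (BAOc Sig) rL rho).
  { intros C (j & c & z & HB) HC v Hprem.
    set (m := Model C j c z HB HC (fun x => v (ix x))).
    assert (Hfacts : forall f, In f l -> fact_holds m f).
    { intros f Hf; unfold m; rewrite fact_holds_identity.
      set (e := fact_identity ix f).
      apply (BAO_le_antisym _ _ j c z _ _ HB);
        [apply (Hprem e) | apply (Hprem (snd e, fst e))];
        apply in_flat_map; exists f; simpl; auto. }
    assert (Hvab : v (ix a) = v (ix b)) by exact (Hab m Hfacts).
    unfold holds_imp; simpl; rewrite <- Hvab.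
    apply (BAO_le_refl _ _ j c z _ HB). }
  set (w := fun n => nth n L (top A)).
  assert (Hw : forall x, In x L -> w (ix x) = x) by (intros x Hx; apply nth_index_of, Hx).
  assert (Hconcl := rL_conservative rho Hrho A A_SLO A_rL w).
  unfold holds_imp in Hconcl; simpl in Hconcl.
  rewrite !Hw in Hconcl by (simpl; auto).
  apply Hconcl; intros i Hi; apply in_flat_map in Hi as (f & Hf & Hi).
  assert (Hfw : eval A w (fst (fact_identity ix f)) = eval A w (snd (fact_identity ix f))).
  { apply fact_identity_in_A; intros x Hx; apply Hw; right; right.
    apply in_flat_map; exists f; auto. }
  destruct Hi as [<- | [<- | []]]; unfold holds_imp; simpl;
    rewrite Hfw; apply SLO_le_refl, A_SLO.
Qed.

Lemma gen_embedding : embedding A presented (fun a => cl (gen a)).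
Proof.
  repeat split.
  - intros a b Hab; apply (cls_eq _ _ entailed_equiv) in Hab as [l Hl].
    apply SLO_le_antisym; [exact A_SLO | apply (entails_gen_le l) ..].
    + exact Hl.
    + intros m Hm; symmetry; exact (Hl m Hm).
  - intros a b; rewrite meet_cl; apply (cls_eq _ _ entailed_equiv).
    apply (entailed_fact (FMeet a b)); auto.
  - apply (cls_eq _ _ entailed_equiv), (entailed_fact FTop); auto.
  - intros R a; rewrite dia_cl; apply (cls_eq _ _ entailed_equiv).
    apply (entailed_fact (FDia R a)); auto.
Qed.

End Conservativity.
End PresentedBAO.

Lemma BAO_rule_conservative_embeddable Sig rL :
  C_rule_conservative Sig (BAOc Sig) rL -> C_embeddable Sig (BAOc Sig) rL.
Proof.
  intros Hcons A HA HAv; exists (presented Sig A rL); split; [|split].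
  - exists (pjoin Sig A rL), (pcompl Sig A rL), (cls (entailed Sig A rL) (tbot Sig A)).
    apply presented_BAO.
  - apply presented_validates.
  - exists (fun a => cls (entailed Sig A rL) (gen Sig A a)); apply gen_embedding; assumption.
Qed.

Theorem theorem9p12 (Sig : Type) (rL : spirule Sig -> Prop) :
  is_spi_logic Sig rL ->
  BAO_complex Sig rL ->
  (complex Sig rL <-> globally_complete Sig rL) /\
  (globally_complete Sig rL <-> C_rule_conservative Sig (BAOc Sig) rL) /\
  (C_rule_conservative Sig (BAOc Sig) rL <-> C_embeddable Sig (BAOc Sig) rL).
Proof.
  intros _ Hbc.
  assert (i_ii : complex Sig rL -> globally_complete Sig rL)
    by apply C_embeddable_rule_conservative.
  assert (ii_iii : globally_complete Sig rL -> C_rule_conservative Sig (BAOc Sig) rL)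
    by apply C_rule_conservative_sub, CA_BAO.
  assert (iii_iv := BAO_rule_conservative_embeddable Sig rL).
  assert (iv_i : C_embeddable Sig (BAOc Sig) rL -> complex Sig rL).
  { intros Hiv; exact (embeddable_into_trans _ _ _ _ _ Hiv (BAO_complex_embeddable _ _ Hbc)). }
  tauto.
Qed.
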